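(* There exists a constant $C_A>0$ depending only on $A$, and for every $\varepsilon>0$ there exists a constant $c_{p_0,A,\varepsilon}>0$ depending only on $p_0,A,\varepsilon$, such that for every information structure $\mathbf q$, $$C_A\,\mathbb E\big[d(\mathbf q,\Delta^c_A(p_0))\big]\ \ge\ \mathrm{VoI}_A(\mathbf q)\ \ge\ c_{p_0,A,\varepsilon}\,\mathbb P\{\mathbf q\notin \Delta^c_{A,\varepsilon}(p_0)\}.$$
   Context: Let $K$ be a finite set of states of nature. Signed measures on $K$ are identified with $\mathbb R^K$, with scalar product $\langle s,v\rangle=\sum_{k\in K}s_kv_k$ and Euclidean norm $\|\cdot\|$. Let $\Delta\subset\mathbb R^K$ be the simplex of probability distributions on $K$, and fix a prior $p_0\in\Delta$ with full support. The action set $A\subset\mathbb R^K$ is the closed convex hull $\overline{\mathrm{co}}\{(g(d,k))_{k\in K}: d\in D\}$ for a compact set $D$ and a continuous $g:D\times K\to\mathbb R$; in particular $A$ is a nonempty compact convex subset of $\mathbb R^K$. The value function is $v_A(p)=\max_{a\in A}\langle p,a\rangle$ for $p\in\Delta$. For $p\in\Delta$, $A^\star(p)=\{a\in A:\langle p,a'\rangle\le\langle p,a\rangle\ \forall a'\in A\}$. For $a\in A$, $\Delta^\star_A(a)=\{p\in\Delta:\langle p,a'\rangle\le\langle p,a\rangle\ \forall a'\in A\}$. The confidence set is $\Delta^c_A(p_0)=\bigcap_{a\in A^\star(p_0)}\Delta^\star_A(a)$. For $q\in\Delta$, $d(q,\Delta^c_A(p_0))=\inf_{p\in\Delta^c_A(p_0)}\|p-q\|$,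 and for $\varepsilon>0$, $\Delta^c_{A,\varepsilon}(p_0)=\{q\in\Delta: d(q,\Delta^c_A(p_0))<\varepsilon\}$. An information structure is a random variable $\mathbf q$ on a probability space $(\Omega,\mathcal F,\mathbb P)$ with values in $\Delta$ and $\mathbb E[\mathbf q]=p_0$. The value of information is $\mathrm{VoI}_A(\mathbf q)=\mathbb E[v_A(\mathbf q)]-v_A(p_0)$. *)

From HB Require Import structures.
From mathcomp Require Import all_boot all_order all_algebra.
From mathcomp Require Import all_classical all_reals all_analysis.
Set Implicit Arguments. Unset Strict Implicit. Unset Printing Implicit Defensive.
Import Order.TTheory GRing.Theory Num.Theory.
Local Open Scope classical_set_scope.
Local Open Scope ring_scope.

Section Defs.
Context {R : realType} {K : finType}.

Definition dotp (s v : K -> R) : R := \sum_(k : K) s k * v k.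

Definition enorm (v : K -> R) : R := Num.sqrt (\sum_(k : K) v k ^+ 2).

Definition simplex : set (K -> R) :=
  [set p | (forall k, 0 <= p k) /\ \sum_(k : K) p k = 1].

Definition conv_hull (S : set (K -> R)) : set (K -> R) :=
  [set a | exists (n : nat) (w : 'I_n -> R) (x : 'I_n -> K -> R),
      (forall i, 0 <= w i) /\ \sum_(i < n) w i = 1 /\ (forall i, S (x i)) /\
      (forall k, a k = \sum_(i < n) w i * x i k)].

Definition eclosure (S : set (K -> R)) : set (K -> R) :=
  [set a | forall e : R, 0 < e -> exists2 s, S s & enorm (fun k => a k - s k) < e].

Definition action_set {T : Type} (D : set T) (g : T -> K -> R) : set (K -> R) :=
  eclosure (conv_hull [set (fun k => g x k) | x in D]).

(* v_A(p) = max_{a in A} <p,a> (the sup, which is attained for compact nonempty A) *)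
Definition valA (A : set (K -> R)) (p : K -> R) : R := sup [set dotp p a | a in A].

Definition Astar (A : set (K -> R)) (p : K -> R) : set (K -> R) :=
  [set a | A a /\ forall a', A a' -> dotp p a' <= dotp p a].

Definition Dstar (A : set (K -> R)) (a : K -> R) : set (K -> R) :=
  [set p | simplex p /\ forall a', A a' -> dotp p a' <= dotp p a].

Definition confset (A : set (K -> R)) (p0 : K -> R) : set (K -> R) :=
  [set p | simplex p /\ forall a, Astar A p0 a -> Dstar A a p].

Definition dist_to_set (q : K -> R) (S : set (K -> R)) : R :=
  inf [set enorm (fun k => p k - q k) | p in S].

Definition confset_eps (A : set (K -> R)) (p0 : K -> R) (eps : R) : set (K -> R) :=
  [set q | simplex q /\ dist_to_set q (confset A p0) < eps].

End Defs.

(* The value of information is an expected regret: if [<p0, b> = v_A(p0)] then,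
   since [E q = p0], [VoI(q) = E[v_A(q) - <q, b>]].  For [a] in [A*(p0)] the regret
   [v_A(.) - <., a>] is Lipschitz and vanishes on the confidence set, hence is at most
   a multiple of the distance to it; this is the upper bound.  Away from the
   confidence set every belief has positive regret for some [a] in [A*(p0)]; by
   compactness finitely many such [a] suffice, and their average [b], still optimal
   at [p0], has a regret bounded below by a positive constant on the compact set of
   beliefs at distance at least [eps]; this is the lower bound. *)

From HB Require Import structures.
From mathcomp Require Import all_boot all_order all_algebra.
From mathcomp Require Import all_classical all_reals all_analysis.
From mathcomp Require Import ring lra measurable_realfun.
Import Order.TTheory GRing.Theory Num.Theory.
Import numFieldNormedType.Exports.
Local Open Scope classical_set_scope.
Local Open Scope ring_scope.

Set Implicit Arguments. Unset Strict Implicit. Unset Printing Implicit Defensive.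

Local Notation ptws K R := (prod_topology (fun _ : K => (R : ptopologicalType))).

Section Norms.
Variables (R : realType) (K : finType).
Implicit Types (u v p q : K -> R) (S : set (K -> R)).

Definition dist1 u v : R := \sum_k `|u k - v k|.

Lemma dist1C u v : dist1 u v = dist1 v u.
Proof. by apply: eq_bigr => k _; rewrite distrC. Qed.

Lemma dist1_ge0 u v : 0 <= dist1 u v.
Proof. exact: sumr_ge0. Qed.

Lemma normr_le_sumr_norm v k : `|v k| <= \sum_i `|v i|.
Proof. by rewrite (bigD1 k) //= lerDl; apply: sumr_ge0. Qed.

Lemma dist1_simplex0 p : simplex p -> dist1 p (fun=> 0) = 1.
Proof.
by move=> [p0 <-]; apply: eq_bigr => k _; rewrite subr0 ger0_norm.
Qed.

Lemma enorm_ge0 v : 0 <= enorm v.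
Proof. exact: sqrtr_ge0. Qed.

Lemma enorm0 : enorm (fun _ : K => 0 : R) = 0.
Proof. by rewrite /enorm big1 ?sqrtr0 // => k _; rewrite expr0n. Qed.

Lemma sumr_sqr_ge0 v : 0 <= \sum_k v k ^+ 2.
Proof. by apply: sumr_ge0 => k _; exact: sqr_ge0. Qed.

Lemma normr_le_enorm v k : `|v k| <= enorm v.
Proof.
rewrite /enorm -sqrtr_sqr ler_sqrt ?sumr_sqr_ge0 //.
rewrite (bigD1 k) //= lerDl; apply: sumr_ge0 => i _; exact: sqr_ge0.
Qed.

Lemma sumr_norm_le_enorm v : \sum_k `|v k| <= #|K|%:R * enorm v.
Proof.
apply: le_trans (ler_sum _ (fun k _ => normr_le_enorm v k)) _.
by rewrite sumr_const mulr_natl.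
Qed.

Lemma enorm_le_sumr_norm v : enorm v <= \sum_k `|v k|.
Proof.
have S0 : 0 <= \sum_k `|v k| by apply: sumr_ge0.
rewrite /enorm -[X in _ <= X]ger0_norm // -sqrtr_sqr ler_sqrt ?sqr_ge0 //.
rewrite expr2 mulr_suml; apply: ler_sum => k _.
rewrite -real_normK ?num_real // expr2.
exact/ler_wpM2l/normr_le_sumr_norm.
Qed.

Lemma cauchy_schwarz u v :
  (\sum_k u k * v k) ^+ 2 <= (\sum_k u k ^+ 2) * (\sum_k v k ^+ 2).
Proof.
set A := \sum_k u k ^+ 2; set B := \sum_k v k ^+ 2; set C := \sum_k u k * v k.
have [B0|B_neq0] := eqVneq B 0.
  have v0 k : v k = 0.
    apply/eqP; rewrite -sqrf_eq0; move/eqP: B0.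
    by rewrite psumr_eq0 => [/allP/(_ k (mem_index_enum k))|i _]; [|exact: sqr_ge0].
  have -> : C = 0 by rewrite /C big1 // => k _; rewrite v0 mulr0.
  by rewrite B0 expr0n mulr0.
have B_gt0 : 0 < B by rewrite lt_def B_neq0 sumr_sqr_ge0.
have expand : \sum_k (B * u k - C * v k) ^+ 2 = B * (A * B - C ^+ 2).
  rewrite (eq_bigr (fun k => B ^+ 2 * u k ^+ 2 - (2 * B * C) * (u k * v k)
     + C ^+ 2 * v k ^+ 2)); last by move=> k _; ring.
  rewrite big_split /= sumrB -!mulr_sumr -/A -/B -/C; ring.
by have := sumr_sqr_ge0 (fun k => B * u k - C * v k); rewrite expand pmulr_rge0 // subr_ge0.
Qed.

Lemma enormD u v : enorm (fun k => u k + v k) <= enorm u + enorm v.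
Proof.
rewrite /enorm.
set A := \sum_k u k ^+ 2; set B := \sum_k v k ^+ 2; set C := \sum_k u k * v k.
have A0 : 0 <= A := sumr_sqr_ge0 u; have B0 : 0 <= B := sumr_sqr_ge0 v.
rewrite -[X in _ <= X]ger0_norm ?addr_ge0 ?sqrtr_ge0 // -sqrtr_sqr.
rewrite ler_sqrt ?sqr_ge0 // sqrrD !sqr_sqrtr //.
have -> : \sum_k (u k + v k) ^+ 2 = A + 2 * C + B.
  rewrite (eq_bigr (fun k => u k ^+ 2 + 2 * (u k * v k) + v k ^+ 2)).
    by rewrite !big_split /= -mulr_sumr.
  by move=> k _; ring.
have : C <= Num.sqrt A * Num.sqrt B.
  apply: le_trans (ler_norm C) _.
  by rewrite -sqrtr_sqr -sqrtrM // ler_sqrt ?mulr_ge0 // cauchy_schwarz.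
lra.
Qed.

Lemma enorm_subr_le_dist1 p q q' :
  enorm (fun k => p k - q' k) <= enorm (fun k => p k - q k) + dist1 q q'.
Proof.
have -> : (fun k => p k - q' k) = (fun k => (p k - q k) + (q k - q' k)).
  by apply: funext => k; ring.
apply: le_trans (enormD _ _) _; rewrite lerD2l; exact: enorm_le_sumr_norm.
Qed.

Lemma dist_le q S p : S p -> dist_to_set q S <= enorm (fun k => p k - q k).
Proof.
move=> Sp; apply: ge_inf; last by exists p.
by exists 0 => _ [p' _ <-]; exact: enorm_ge0.
Qed.

Lemma dist_le0 p S : S p -> dist_to_set p S <= 0.
Proof.
move=> /(dist_le p); congr (_ <= _); rewrite -enorm0.
by congr enorm; apply: funext => k; rewrite subrr.
Qed.

Lemma le_dist q S x : S !=set0 ->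
  (forall p, S p -> x <= enorm (fun k => p k - q k)) -> x <= dist_to_set q S.
Proof.
move=> [p Sp] lex; apply: lb_le_inf; first by exists (enorm (fun k => p k - q k)), p.
by move=> _ [p' Sp' <-]; exact: lex.
Qed.

Lemma dist_le_add_dist1 q q' S : S !=set0 ->
  dist_to_set q' S <= dist_to_set q S + dist1 q q'.
Proof.
move=> S0; rewrite -lerBlDr; apply: le_dist => // p Sp.
by rewrite lerBlDr; apply: le_trans (dist_le q' Sp) (enorm_subr_le_dist1 _ _ _).
Qed.

End Norms.

(* Compactness by open covers ([compact_cover]) is stated for pointed spaces. *)
HB.instance Definition _ (R : realType) (K : finType) :=
  Pointed.copy (ptws K R) (K -> (R : ptopologicalType)).


Section Lipschitz.
Variables (R : realType) (K : finType).
Implicit Types (F G : (K -> R) -> R) (C : R).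

Definition lipschitz1 F C := forall x y, `|F x - F y| <= C * dist1 x y.

Lemma lipschitz1B F G C1 C2 :
  lipschitz1 F C1 -> lipschitz1 G C2 -> lipschitz1 (fun x => F x - G x) (C1 + C2).
Proof.
move=> lipF lipG x y; rewrite mulrDl.
have -> : F x - G x - (F y - G y) = (F x - F y) - (G x - G y) by ring.
by apply: le_trans (ler_normB _ _) _; exact: lerD.
Qed.

Lemma lipschitz1_dotp (b : K -> R) M : (forall k, `|b k| <= M) ->
  lipschitz1 (dotp ^~ b) M.
Proof.
move=> bM x y; rewrite /dotp -sumrB /dist1 mulr_sumr.
apply: le_trans (ler_norm_sum _ _ _) _; apply: ler_sum => k _.
by rewrite -mulrBl normrM mulrC; exact: ler_wpM2r.
Qed.

Lemma lipschitz1_dist S : S !=set0 -> lipschitz1 (dist_to_set ^~ S) 1.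
Proof.
move=> S0 x y; rewrite mul1r ler_norml.
have := dist_le_add_dist1 x y S0; have := dist_le_add_dist1 y x S0.
by rewrite (dist1C y x); lra.
Qed.

Lemma lipschitz1_le_dist F C (S : set (K -> R)) q :
  0 < C -> lipschitz1 F C -> S !=set0 -> (forall p, S p -> F p <= 0) ->
  F q <= C * #|K|.+1%:R * dist_to_set q S.
Proof.
move=> C_gt0 lipF S0 FS_le0; rewrite -ler_pdivrMl ?mulr_gt0 //.
apply: le_dist => // p Sp; rewrite ler_pdivrMl ?mulr_gt0 //.
have := lipF q p; rewrite ler_norml dist1C => /andP[_ Fqp].
apply: le_trans (_ : C * dist1 p q <= _); first by have := FS_le0 p Sp; lra.
rewrite -mulrA ler_pM2l //; apply: le_trans (sumr_norm_le_enorm _) _.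
by rewrite ler_wpM2r ?enorm_ge0 // ler_nat.
Qed.

Lemma lipschitz1_sum : lipschitz1 (fun x => \sum_k x k) 1.
Proof. by move=> x y; rewrite mul1r -sumrB; exact: ler_norm_sum. Qed.

Lemma lipschitz1_continuous F C : lipschitz1 F C -> continuous (F : ptws K R -> R).
Proof.
move=> lipF x; apply/cvgrPdist_lt => e e0.
have eta0 : 0 < e / ((`|C| + 1) * #|K|.+1%:R) by rewrite divr_gt0 // mulr_gt0.
set eta := e / _ in eta0.
have near_x : \forall y \near x, forall k, `|(x k : R) - (y : ptws K R) k| < eta.
  have near_k k : \forall y \near x, `|(x k : R) - (y : ptws K R) k| < eta.
    by have /cvgrPdist_lt/(_ eta eta0) := @proj_continuous K (fun=> (R : ptopologicalType)) k x.
  exact: (@filter_forall _ K (fun k (y : ptws K R) => `|(x k : R) - y k| < eta) _ _ near_k).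
apply: filterS near_x => y xy_near.
apply: le_lt_trans (lipF x y) _.
have d1_small : dist1 x y <= #|K|%:R * eta.
  by apply: le_trans (ler_sum _ (fun k _ => ltW (xy_near k))) _; rewrite sumr_const mulr_natl.
apply: le_lt_trans (_ : `|C| * (#|K|%:R * eta) < e).
  exact: le_trans (ler_wpM2r (dist1_ge0 _ _) (ler_norm C)) (ler_wpM2l _ d1_small).
have c_gt0 : 0 < (`|C| + 1) * #|K|.+1%:R by rewrite mulr_gt0.
rewrite mulrA (_ : e = (`|C| + 1) * #|K|.+1%:R * eta); last first.
  by rewrite /eta mulrC divfK // gt_eqF.
rewrite ltr_pM2r // -natr1 mulrDr mulr1 mulrDl mul1r.
have := normr_ge0 C; have : (0 : R) <= #|K|%:R by []; nra.
Qed.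

Lemma lipschitz1_closed_ge F C r :
  lipschitz1 F C -> closed [set x : ptws K R | r <= F x].
Proof.
move=> /lipschitz1_continuous Fc.
apply: (@preimage_closed (ptws K R) _ F [set y | r <= y]); last exact: closed_ge.
by move=> x _; exact: Fc.
Qed.

Lemma compact_simplex : compact (simplex : set (ptws K R)).
Proof.
have -> : simplex = [set x : ptws K R | forall k, `[0, 1]%classic (x k)] `&`
                    [set x : ptws K R | \sum_k x k = 1].
  apply/seteqP; split => [x [x0 x1]|x [x01 x1]]; split => //=.
    move=> k; rewrite in_itv /= x0 -x1 (bigD1 k) //= lerDl.
    exact: sumr_ge0.
  by move=> k; have /andP[] := x01 k.
apply: compact_closedI.
  exact: (@tychonoff K (fun=> (R : ptopologicalType)) (fun=> `[0, 1]%classic)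
            (fun=> @segment_compact R 0 1)).
apply: (@preimage_closed (ptws K R) _ (fun x => \sum_k x k) [set y | y = 1]).
  by move=> x _; exact: (lipschitz1_continuous lipschitz1_sum) x.
exact: closed_eq.
Qed.
End Lipschitz.

Lemma compact_pos_lower_bound (R : realType) (T : topologicalType) (S : set T)
    (f : T -> R) :
  compact S -> {within S, continuous f} -> (forall x, S x -> 0 < f x) ->
  exists2 c, 0 < c & forall x, S x -> c <= f x.
Proof.
move=> cS fc f_gt0; have [->|/set0P S0] := eqVneq S set0; first by exists 1.
have [x0 /set_mem Sx0 x0_min] := compact_EVT_min S0 cS fc.
by exists (f x0) => [|x Sx]; [exact: f_gt0|apply: x0_min; rewrite inE].
Qed.


Section Measurability.
Variables (R : realType) (K : finType) (d : measure_display) (Om : measurableType d).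
Variable q : Om -> K -> R.
Hypothesis mq : forall k, measurable_fun setT (fun w => q w k).

Definition rat_point (n : nat) : K -> R :=
  fun k => ratr (odflt [ffun=> 0] (@unpickle {ffun K -> rat} n) k).

Lemma rat_point_dense (x : K -> R) e : 0 < e -> exists n, dist1 (rat_point n) x < e.
Proof.
move=> e0; set e' := e / #|K|.+1%:R.
have e'0 : 0 < e' by rewrite divr_gt0.
have near_k k : exists r : rat, `|ratr r - x k| < e'.
  have [r] : exists r : rat, ratr r \in `](x k - e'), (x k + e')[.
    by apply: rat_in_itvoo; rewrite ltrD2l gtrN.
  by rewrite in_itv /= => /andP[? ?]; exists r; rewrite ltr_norml; apply/andP; split; lra.
have [r r_near] := choice near_k.
exists (pickle [ffun k => r k]).
apply: le_lt_trans (_ : \sum_(k : K) e' < e).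
  by apply: ler_sum => k _; rewrite /rat_point pickleK /= ffunE; exact/ltW.
by rewrite sumr_const -mulr_natr /e' mulrAC ltr_pdivrMr // ltr_pM2l // ltr_nat.
Qed.

Lemma lipschitz1_measurable (F : (K -> R) -> R) C : 0 <= C -> lipschitz1 F C ->
  measurable_fun setT (fun w => F (q w)).
Proof.
move=> C0 lipF.
pose cone n w := F (rat_point n) - C * dist1 (rat_point n) (q w).
have cone_le n w : cone n w <= F (q w).
  by have := lipF (rat_point n) (q w); rewrite /cone ler_norml => /andP[_]; lra.
(* [F] is the supremum of the cones [F r - C d(r, .)] at rational points [r] *)
have F_sups w : F (q w) = sups (cone ^~ w) 0.
  apply/eqP; rewrite eq_le; apply/andP; split; last first.
    by apply: ge_sup; [exists (cone 0 w), 0|move=> _ [n _ <-]; exact: cone_le].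
  apply/ler_addgt0Pr => e e0.
  have c0 : 0 < 2 * C + 1 by lra.
  have [n close] := rat_point_dense (q w) (divr_gt0 e0 c0).
  have : cone n w <= sups (cone ^~ w) 0.
    apply: ub_le_sup; last by exists n.
    by exists (F (q w)) => _ [m _ <-]; exact: cone_le.
  have := lipF (rat_point n) (q w); rewrite ler_norml => /andP[+ _].
  rewrite ltr_pdivlMr // in close.
  have := dist1_ge0 (rat_point n) (q w); rewrite /cone; nra.
apply: (eq_measurable_fun (fun w => sups (cone ^~ w) 0)) => [w _|]; first by rewrite F_sups.
apply: measurable_fun_sups => [w _|n]; first by exists (F (q w)) => _ [m _ <-]; exact: cone_le.
apply: measurable_funB; first exact: measurable_cst.
apply: measurable_funM; first exact: measurable_cst.
apply: measurable_sum => k.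
apply: measurableT_comp; first exact: normr_measurable.
by apply: measurable_funB; [exact: measurable_cst|exact: mq].
Qed.

End Measurability.

Section Expectation.
Variables (R : realType) (K : finType) (d : measure_display) (Om : measurableType d).
Variables (P : probability Om R) (q : Om -> K -> R).
Hypotheses (mq : forall k, measurable_fun setT (fun w => q w k))
           (sq : forall w, simplex (q w)).

Lemma lipschitz1_integrable (F : (K -> R) -> R) C : 0 <= C -> lipschitz1 F C ->
  P.-integrable setT (fun w => (F (q w))%:E).
Proof.
move=> C0 lipF; set F0 := F (fun=> 0).
apply: (@le_integrable _ _ _ P _ measurableT _ (EFin \o cst (`|F0| + C))).
- exact/measurable_EFinP/(lipschitz1_measurable mq C0 lipF).
- move=> w _ /=; rewrite lee_fin [X in _ <= X]ger0_norm ?addr_ge0 //.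
  have := lipF (q w) (fun=> 0); rewrite dist1_simplex0 // mulr1 -/F0.
  have := ler_normD (F (q w) - F0) F0; rewrite subrK; lra.
- exact: finite_measure_integrable_cst.
Qed.

Lemma integral_dotp (p0 b : K -> R) :
  (forall k, (\int[P]_w (q w k)%:E = (p0 k)%:E)%E) ->
  (\int[P]_w (dotp (q w) b)%:E = (dotp p0 b)%:E)%E.
Proof.
move=> mean_q.
have coord_int k : P.-integrable setT (fun w => (q w k)%:E).
  apply: (@lipschitz1_integrable (fun x => x k) 1) => // x y.
  by rewrite mul1r; exact: (normr_le_sumr_norm (fun k => x k - y k)).
rewrite /dotp; under eq_integral do rewrite -sumEFin.
rewrite integral_sum //; last first.
  move=> k; apply: (eq_integrable measurableT _ _ _ (integrableZl measurableT (b k) (coord_int k))).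
  by move=> w _; rewrite EFinM muleC.
rewrite -sumEFin; apply: eq_bigr => k _.
under eq_integral do rewrite EFinM muleC.
by rewrite integralZl // mean_q -EFinM mulrC.
Qed.

End Expectation.

Lemma le_integral_indic (R : realType) (d : measure_display) (Om : measurableType d)
    (P : probability Om R) (f : Om -> R) (E : set Om) (c : R) :
  measurable E -> P.-integrable setT (fun w => (f w)%:E) ->
  (forall w, 0 <= f w) -> (forall w, E w -> c <= f w) ->
  (c%:E * P E <= \int[P]_w (f w)%:E)%E.
Proof.
move=> mE f_int f_ge0 Ef_ge.
have indic_int : P.-integrable setT (fun w => (c * \1_E w)%:E).
  apply: (eq_integrable measurableT _ _ _ (integrableZl measurableT c (integrable_indic P mE))).
  by move=> w _; rewrite EFinM.
apply: (@le_trans _ _ (\int[P]_w (c * \1_E w)%:E)%E).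
  under eq_integral do rewrite EFinM.
  by rewrite integralZl ?integral_indic ?setIT //; exact: integrable_indic.
apply: le_integral => // w _; rewrite lee_fin indicE.
by case: (boolP (w \in E)) => [/set_mem/Ef_ge|_]; rewrite ?mulr1 ?mulr0.
Qed.

Section ScalarProduct.
Variables (R : realType) (K : finType).
Implicit Types (S : set (K -> R)) (p a : K -> R) (m : R).

Lemma dotp_conv_hull_le S p m : (forall x, S x -> dotp p x <= m) ->
  forall a, conv_hull S a -> dotp p a <= m.
Proof.
move=> Sm a [n [w [x [w0 [w1 [Sx /funext ->]]]]]].
have -> : dotp p (fun k => \sum_i w i * x i k) = \sum_i w i * dotp p (x i).
  rewrite /dotp (eq_bigr (fun k => \sum_i w i * (p k * x i k))); last first.
    by move=> k _; rewrite mulr_sumr; apply: eq_bigr => i _; ring.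
  by rewrite exchange_big; apply: eq_bigr => i _; rewrite mulr_sumr.
apply: le_trans (_ : \sum_i w i * m <= _); last by rewrite -mulr_suml w1 mul1r.
by apply: ler_sum => i _; apply: ler_wpM2l => //; exact: Sm.
Qed.

Lemma dotp_eclosure_le S p m : (forall x, S x -> dotp p x <= m) ->
  forall a, eclosure S a -> dotp p a <= m.
Proof.
move=> Sm a Sa; apply/ler_addgt0Pr => e e0.
set P := \sum_k `|p k| + 1.
have P_gt0 : 0 < P by rewrite ltr_wpDl ?sumr_ge0.
have [s Ss as_close] := Sa (e / P) (divr_gt0 e0 P_gt0).
have : dotp p a - dotp p s <= (\sum_k `|p k|) * enorm (fun k => a k - s k).
  rewrite /dotp -sumrB mulr_suml; apply: ler_sum => k _; rewrite -mulrBr.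
  apply: le_trans (ler_norm _) _; rewrite normrM; apply: ler_wpM2l => //.
  exact: (normr_le_enorm (fun k => a k - s k)).
have : (\sum_k `|p k|) * enorm (fun k => a k - s k) <= P * (e / P).
  by apply: ler_pM; rewrite ?sumr_ge0 ?enorm_ge0 ?lerDl ?ltW.
rewrite [P * _]mulrC divfK ?gt_eqF //; have := Sm s Ss; lra.
Qed.

Lemma dotp_action_set_le (T : Type) (D : set T) (g : T -> K -> R) p m :
  (forall x, D x -> dotp p (g x) <= m) ->
  forall a, action_set D g a -> dotp p a <= m.
Proof.
move=> Dm; apply: dotp_eclosure_le; apply: dotp_conv_hull_le.
by move=> _ [x Dx <-]; exact: Dm.
Qed.

Lemma action_set_gen (T : Type) (D : set T) (g : T -> K -> R) x :
  D x -> action_set D g (g x).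
Proof.
move=> Dx e e0; exists (g x).
  exists 1%N, (fun=> 1), (fun=> g x); split=> //; split; first by rewrite big_ord1.
  by split=> [i|k]; [exists x|rewrite big_ord1 mul1r].
have -> : (fun k => g x k - g x k) = (fun=> 0) by apply: funext => k; rewrite subrr.
by rewrite enorm0.
Qed.

Lemma dotp_delta k c a : dotp (fun i => c * (i == k)%:R) a = c * a k.
Proof.
rewrite /dotp (bigD1 k) //= eqxx mulr1 big1 ?addr0 // => i /negbTE ->.
by rewrite mulr0 mul0r.
Qed.

Definition avg (s : seq (K -> R)) : K -> R :=
  fun k => (size s)%:R^-1 * \sum_(a <- s) a k.

Lemma dotp_avg x s : dotp x (avg s) = (size s)%:R^-1 * \sum_(a <- s) dotp x a.
Proof.
rewrite /dotp /avg exchange_big mulr_sumr; apply: eq_bigr => k _.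
by rewrite mulrCA mulr_sumr.
Qed.

End ScalarProduct.

Section Value.
Variables (R : realType) (K : finType) (A : set (K -> R)).
Hypothesis Astar_ex : forall p, exists a, Astar A p a.
Implicit Types (p q a b : K -> R).

Definition regret a q := valA A q - dotp q a.

Lemma valA_Astar p a : Astar A p a -> valA A p = dotp p a.
Proof.
move=> [Aa a_max]; apply/eqP; rewrite eq_le; apply/andP; split.
  by apply: ge_sup; [exists (dotp p a), a|move=> _ [a' Aa' <-]; exact: a_max].
apply: ub_le_sup; last by exists a.
by exists (dotp p a) => _ [a' Aa' <-]; exact: a_max.
Qed.

Lemma valA_ge p a : A a -> dotp p a <= valA A p.
Proof. by move=> Aa; have [b pb] := Astar_ex p; rewrite (valA_Astar pb); case: pb => _; apply. Qed.

Lemma regret_ge0 a q : A a -> 0 <= regret a q.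
Proof. by move=> Aa; rewrite subr_ge0 valA_ge. Qed.

Lemma regret_avg s q : s != [::] ->
  regret (avg s) q = (size s)%:R^-1 * \sum_(a <- s) regret a q.
Proof.
move=> s0; have size_neq0 : (size s)%:R != 0 :> R by rewrite pnatr_eq0 size_eq0.
rewrite /regret sumrB big_const_seq count_predT iter_addr_0 mulrBr.
by rewrite -(mulr_natl (valA A q)) mulrA mulVf // mul1r dotp_avg.
Qed.

Variable M : R.
Hypothesis A_bounded : forall a k, A a -> `|a k| <= M.

Lemma valA_lipschitz : lipschitz1 (valA A) M.
Proof.
suff le_dist1 x y : valA A x - valA A y <= M * dist1 x y.
  move=> x y; rewrite ler_norml.
  by have := le_dist1 x y; have := le_dist1 y x; rewrite dist1C => ? ?; apply/andP; split; lra.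
have [a xa] := Astar_ex x; rewrite (valA_Astar xa).
have := valA_ge y xa.1; have := lipschitz1_dotp (fun k => A_bounded k xa.1) x y.
by rewrite ler_norml => /andP[_]; lra.
Qed.

Lemma regret_lipschitz b N : (forall k, `|b k| <= N) -> lipschitz1 (regret b) (M + N).
Proof. by move=> bN; apply: lipschitz1B; [exact: valA_lipschitz|exact: lipschitz1_dotp]. Qed.

End Value.

Section GeneratedActionSet.
Variables (R : realType) (K : finType) (T : topologicalType).
Variables (D : set T) (g : T -> K -> R).
Hypotheses (cD : compact D) (D0 : D !=set0)
  (gc : forall k, {within D, continuous (fun x => g x k)}).
Local Notation A := (action_set D g).

Lemma action_set_Astar p : exists a, Astar A p a.
Proof.
have cpg : {within D, continuous (fun x => dotp p (g x))}.
  apply: continuous_big => [|k _]; first exact: add_continuous.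
  by move=> x; apply: cvgM; [exact: cvg_cst|exact: gc].
have [x0 /set_mem Dx0 x0_max] := compact_EVT_max D0 cD cpg.
exists (g x0); split; first exact: action_set_gen.
by apply: dotp_action_set_le => x Dx; apply: x0_max; rewrite inE.
Qed.

Lemma action_set_bounded : exists2 M, 0 < M & forall a k, A a -> `|a k| <= M.
Proof.
have gk_bounded k : exists Mk : R, forall x, D x -> `|g x k| <= Mk.
  have [Mk [_ Mk_bound]] := compact_bounded (continuous_compact (@gc k) cD).
  by exists (`|Mk| + 1) => x Dx; apply: Mk_bound; [have := ler_norm Mk; lra|exists x].
have [Mk Mk_bound] := choice gk_bounded.
have Mk_ge0 : 0 <= \sum_k `|Mk k| := sumr_ge0 _ (fun k _ => normr_ge0 (Mk k)).
exists (1 + \sum_k `|Mk k|); first lra.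
have g_bounded x k : D x -> `|g x k| <= 1 + \sum_k `|Mk k|.
  move=> Dx; apply: le_trans (Mk_bound k x Dx) _; apply: le_trans (ler_norm _) _.
  by have := normr_le_sumr_norm Mk k; lra.
move=> a k Aa.
have signed_le c : c = 1 \/ c = -1 -> c * a k <= 1 + \sum_k `|Mk k|.
  move=> c1; rewrite -dotp_delta; apply: dotp_action_set_le Aa => x Dx.
  rewrite dotp_delta; have := g_bounded x k Dx; rewrite ler_norml => /andP[].
  by case: c1 => ->; lra.
have := signed_le 1 (or_introl erefl); have := signed_le (-1) (or_intror erefl).
by rewrite ler_norml => ? ?; apply/andP; split; lra.
Qed.

End GeneratedActionSet.

Section ConfidenceSet.
Variables (R : realType) (K : finType) (A : set (K -> R)).
Hypothesis Astar_ex : forall p, exists a, Astar A p a.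
Variable M : R.
Hypothesis A_bounded : forall a k, A a -> `|a k| <= M.
Variable p0 : K -> R.
Hypothesis sp0 : simplex p0.
Local Notation Cf := (confset A p0).

Lemma confset_p0 : Cf p0.
Proof. by split=> // a [Aa a_max]; split. Qed.

Lemma regret_confset a p : Astar A p0 a -> Cf p -> regret A a p = 0.
Proof.
move=> p0a [_ Cp]; have [_ a_max] := Cp a p0a.
by rewrite /regret (valA_Astar (conj p0a.1 a_max)) subrr.
Qed.

Variable eps : R.
Hypothesis eps_gt0 : 0 < eps.

Definition far_set : set (K -> R) := [set q | simplex q /\ eps <= dist_to_set q Cf].

Lemma compact_far_set : compact (far_set : set (ptws K R)).
Proof.
apply: compact_closedI; first exact: compact_simplex.
exact/lipschitz1_closed_ge/lipschitz1_dist/(ex_intro _ p0 confset_p0).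
Qed.

Lemma far_regret q : far_set q -> exists2 a, Astar A p0 a & 0 < regret A a q.
Proof.
move=> [sq far_q]; apply: contrapT => no_regret.
have : q \in Cf.
  apply/mem_set; split=> // a p0a; split=> // a' Aa'; rewrite leNgt; apply/negP => lt_a'.
  apply: no_regret; exists a => //; apply: lt_le_trans (_ : 0 < dotp q a' - dotp q a) _.
    by rewrite subr_gt0.
  by rewrite lerD2r valA_ge.
by move=> /set_mem/dist_le0/(le_trans far_q); rewrite leNgt eps_gt0.
Qed.

Lemma far_finite_cover : exists s : seq (K -> R),
  (forall a, a \in s -> Astar A p0 a) /\
  forall q, far_set q -> has (fun a => 0 < regret A a q) s.
Proof.
have regret_open a : Astar A p0 a -> open [set q : ptws K R | 0 < regret A a q].
  move=> [Aa _]; apply: (@open_comp (ptws K R) _ (regret A a) [set y | 0 < y]).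
    have := regret_lipschitz Astar_ex A_bounded (fun k => A_bounded k Aa).
    by move=> /lipschitz1_continuous regret_cont x _; exact: regret_cont.
  exact: open_gt.
have cover_far : far_set `<=` cover (Astar A p0) (fun a => [set q : ptws K R | 0 < regret A a q]).
  by move=> q /far_regret [a p0a regret_gt0]; exists a.
move: compact_far_set; rewrite compact_cover.
move=> /(_ _ _ _ regret_open cover_far) [s s_Astar s_cover].
exists (finmap.enum_fset s); split; first by move=> a /s_Astar; rewrite inE.
by move=> q /s_cover [a sa regret_gt0]; apply/hasP; exists a.
Qed.

Lemma regret_far_lower_bound : exists b, exists2 c, 0 < c &
  [/\ dotp p0 b = valA A p0, forall q, 0 <= regret A b q &
      forall q, far_set q -> c <= regret A b q].
Proof.
have [s [s_Astar s_has]] := far_finite_cover.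
have [a0 p0a0] := Astar_ex p0.
have t_Astar a : a \in a0 :: s -> Astar A p0 a.
  by rewrite inE => /predU1P[a_eq|/s_Astar]; rewrite ?a_eq.
have t_regret_ge0 a q : a \in a0 :: s -> 0 <= regret A a q.
  by move=> /t_Astar[Aa _]; exact: regret_ge0.
have mean_regret q := @regret_avg _ _ A (a0 :: s) q isT.
have lip_avg : lipschitz1 (regret A (avg (a0 :: s))) (M + \sum_k `|avg (a0 :: s) k|).
  exact/(regret_lipschitz Astar_ex A_bounded)/normr_le_sumr_norm.
have [c c_gt0 c_le] : exists2 c, 0 < c & forall q, far_set q -> c <= regret A (avg (a0 :: s)) q.
  apply: (@compact_pos_lower_bound _ (ptws K R)) => [| |q far_q].
  - exact: compact_far_set.
  - exact/continuous_subspaceT/lipschitz1_continuous/lip_avg.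
  have t_regret_q_ge0 a : a \in a0 :: s -> 0 <= regret A a q by exact: t_regret_ge0.
  rewrite mean_regret mulr_gt0 ?invr_gt0 ?ltr0n // big_seq lt_def.
  rewrite psumr_neq0 ?sumr_ge0 // andbT.
  case/hasP: (s_has q far_q) => a sa a_gt0.
  by apply/hasP; exists a; rewrite ?inE ?sa ?orbT.
exists (avg (a0 :: s)), c => //; split=> // [|q].
  suff : regret A (avg (a0 :: s)) p0 = 0 by move/eqP; rewrite subr_eq0 => /eqP.
  rewrite mean_regret big_seq big1 ?mulr0 // => a /t_Astar p0a.
  exact: regret_confset confset_p0.
by rewrite mean_regret mulr_ge0 ?invr_ge0 // big_seq sumr_ge0 // => a /t_regret_ge0.
Qed.

End ConfidenceSet.

Section ExpectedRegret.
Variables (R : realType) (K : finType) (A : set (K -> R)).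
Hypothesis Astar_ex : forall p, exists a, Astar A p a.
Variable M : R.
Hypotheses (M_ge0 : 0 <= M) (A_bounded : forall a k, A a -> `|a k| <= M).
Variables (d : measure_display) (Om : measurableType d).
Variables (P : probability Om R) (q : Om -> K -> R) (p0 : K -> R).
Hypotheses (mq : forall k, measurable_fun setT (fun w => q w k))
           (sq : forall w, simplex (q w))
           (mean_q : forall k, (\int[P]_w (q w k)%:E = (p0 k)%:E)%E).

Lemma regret_integrable b : P.-integrable setT (fun w => (regret A b (q w))%:E).
Proof.
apply: (lipschitz1_integrable P mq sq _
  (regret_lipschitz Astar_ex A_bounded (normr_le_sumr_norm b))).
by rewrite addr_ge0 ?sumr_ge0.
Qed.

Lemma value_of_information_regret b : dotp p0 b = valA A p0 ->
  (\int[P]_w (valA A (q w))%:E - (valA A p0)%:E = \int[P]_w (regret A b (q w))%:E)%E.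
Proof.
move=> b_p0; rewrite -b_p0 -(integral_dotp mq sq b mean_q).
have dotp_int : P.-integrable setT (fun w => (dotp (q w) b)%:E).
  exact: (lipschitz1_integrable P mq sq (sumr_ge0 _ _) (lipschitz1_dotp (normr_le_sumr_norm b))).
rewrite -integralB_EFin //.
exact: (lipschitz1_integrable P mq sq M_ge0 (valA_lipschitz Astar_ex A_bounded)).
Qed.

End ExpectedRegret.

Unset Implicit Arguments.

Theorem theorem3p2 (R : realType) (K : finType) (T : topologicalType)
    (D : set T) (g : T -> K -> R) :
  compact D -> D !=set0 ->
  (forall k, {within D, continuous (fun x => g x k)}) ->
  let A := action_set D g in
  exists2 CA : R, 0 < CA &
  forall p0 : K -> R, simplex p0 -> (forall k, 0 < p0 k) ->
  forall eps : R, 0 < eps ->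
  exists2 c : R, 0 < c &
  forall (d : measure_display) (Omega : measurableType d)
         (P : probability Omega R) (q : Omega -> K -> R),
    (forall k, measurable_fun setT (fun w => q w k)) ->
    (forall w, simplex (q w)) ->
    (forall k, (\int[P]_w (q w k)%:E = (p0 k)%:E)%E) ->
    (CA%:E * \int[P]_w (dist_to_set (q w) (confset A p0))%:E
       >= \int[P]_w (valA A (q w))%:E - (valA A p0)%:E)%E /\
    (\int[P]_w (valA A (q w))%:E - (valA A p0)%:E
       >= c%:E * P [set w | ~ confset_eps A p0 eps (q w)])%E.
Proof.
move=> cD D0 gc A.
have Astar_ex := action_set_Astar cD D0 gc.
have [M M_gt0 A_bounded] := action_set_bounded cD gc.
have M_ge0 := ltW M_gt0.
exists ((M + M) * #|K|.+1%:R) => [|p0 sp0 _ eps eps_gt0]; first by rewrite !mulr_gt0 ?addr_gt0.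
have [b [c c_gt0 [b_p0 b_ge0 b_far]]] := regret_far_lower_bound Astar_ex A_bounded sp0 eps_gt0.
exists c => // d Om P q mq sq mean_q.
have Cf0 : confset A p0 !=set0 by exists p0; exact: confset_p0.
have dist_int : P.-integrable setT (fun w => (dist_to_set (q w) (confset A p0))%:E).
  exact: (lipschitz1_integrable P mq sq ler01 (lipschitz1_dist Cf0)).
have bad_far w : ~ confset_eps A p0 eps (q w) <-> eps <= dist_to_set (q w) (confset A p0).
  rewrite leNgt; split=> [bad|]; last by move=> /negP not_lt [_ /not_lt].
  by apply/negP => lt; apply: bad.
split.
  have [a p0a] := Astar_ex p0.
  rewrite (value_of_information_regret Astar_ex M_ge0 A_bounded mq sq mean_q
             (esym (valA_Astar p0a))).
  rewrite -integralZl //; apply: le_integral => //.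
  - exact: (regret_integrable Astar_ex M_ge0 A_bounded P mq sq a).
  - exact: integrableZl.
  move=> w _; rewrite -EFinM lee_fin.
  apply: lipschitz1_le_dist; rewrite ?addr_gt0 //.
    exact: (regret_lipschitz Astar_ex A_bounded (fun k => A_bounded a k p0a.1)).
  by move=> p Cp; rewrite (regret_confset p0a Cp).
rewrite (value_of_information_regret Astar_ex M_ge0 A_bounded mq sq mean_q b_p0).
apply: le_integral_indic => [|//|//|w /bad_far far_q]; last exact: b_far.
  have := lipschitz1_measurable mq ler01 (lipschitz1_dist Cf0) measurableT
            (measurable_itv `[eps, +oo[).
  rewrite setTI; congr measurable; apply/seteqP; split=> w /=; rewrite in_itv /= andbT bad_far //.
exact: (regret_integrable Astar_ex M_ge0 A_bounded P mq sq b).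
Qed.
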